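(* Let $p$ be a prime. The semimetric $d_p''(x,y)=|\log_p|x|_p-\log_p|y|_p|$ on the multiplicative group $\mathbf{Q}_p^*=\mathbf{Q}_p\setminus\{0\}$ is translation-invariant, compatible with the usual topology, and proper; but there is no semi-ultrametric on $\mathbf{Q}_p^*$ that is translation-invariant, compatible with the usual topology, and proper.
   Context: A semi-ultrametric is a semimetric $d$ with $d(x,z)\le\max(d(x,y),d(y,z))$. A semimetric on a topological group is compatible with the topology if every open ball is open; it is proper if closed sets bounded with respect to it are compact. $\mathbf{Q}_p^*$ has the topology induced from $\mathbf{Q}_p$. *)

From mathcomp Require Import all_boot all_order all_algebra.
From mathcomp Require Import all_classical all_reals all_analysis.
Set Implicit Arguments. Unset Strict Implicit. Unset Printing Implicit Defensive.
Import Order.TTheory GRing.Theory Num.Theory.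
Local Open Scope ring_scope.

Definition padic_val (p : nat) (q : rat) : int :=
  (logn p `|numq q|%N)%:Z - (logn p `|denq q|%N)%:Z.

Definition padic_abs_rat (R : realType) (p : nat) (q : rat) : R :=
  if q == 0 then 0 else ((p%:R : R) ^ (- padic_val p q))%R.

(* (K, absK) is (a model of) Q_p: the completion of Q for |.|_p, i.e. a field
   with an absolute value extending |.|_p on Q (via the canonical embedding
   ratr), in which Q is dense and which is complete. *)
Definition is_Qp (p : nat) (R : realType) (K : fieldType) (absK : K -> R) : Prop :=
  (forall x, 0 <= absK x) /\
  (forall x, absK x = 0 <-> x = 0) /\
  (forall x y, absK (x * y) = absK x * absK y) /\
  (forall x y, absK (x + y) <= absK x + absK y) /\
  (forall q : rat, absK (ratr q) = padic_abs_rat R p q) /\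
  (forall x e, 0 < e -> exists q : rat, absK (x - ratr q) < e) /\
      (forall u : nat -> K,
         (forall e, 0 < e -> exists N, forall m n, (N <= m)%N -> (N <= n)%N ->
             absK (u m - u n) < e) ->
         exists l, forall e, 0 < e -> exists N, forall n, (N <= n)%N ->
             absK (u n - l) < e).

Section Qpstar.
Variables (R : realType) (K : fieldType) (absK : K -> R).

Definition Qs_open (U : K -> Prop) : Prop :=
  (forall x, U x -> x != 0) /\
  (forall x, U x -> exists e : R, 0 < e /\
      forall y, y != 0 -> absK (y - x) < e -> U y).

Definition Qs_closed (C : K -> Prop) : Prop :=
  (forall x, C x -> x != 0) /\ Qs_open (fun x => x != 0 /\ ~ C x).

Definition Qs_compact (S : K -> Prop) : Prop :=
  (forall x, S x -> x != 0) /\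
  forall (I : Type) (U : I -> K -> Prop),
    (forall i, Qs_open (U i)) -> (forall x, S x -> exists i, U i x) ->
    exists (n : nat) (f : 'I_n -> I), forall x, S x -> exists k, U (f k) x.

Definition Qs_semimetric (d : K -> K -> R) : Prop :=
  forall x y z, x != 0 -> y != 0 -> z != 0 ->
    [/\ 0 <= d x y, d x x = 0, d x y = d y x & d x z <= d x y + d y z].

Definition Qs_semi_ultrametric (d : K -> K -> R) : Prop :=
  Qs_semimetric d /\
  forall x y z, x != 0 -> y != 0 -> z != 0 -> d x z <= Num.max (d x y) (d y z).

Definition Qs_translation_invariant (d : K -> K -> R) : Prop :=
  forall g x y, g != 0 -> x != 0 -> y != 0 -> d (g * x) (g * y) = d x y.

Definition Qs_compatible (d : K -> K -> R) : Prop :=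
  forall x r, x != 0 -> Qs_open (fun y => y != 0 /\ d x y < r).

Definition Qs_bounded (d : K -> K -> R) (S : K -> Prop) : Prop :=
  exists x0 r, x0 != 0 /\ forall y, S y -> d x0 y <= r.

Definition Qs_proper (d : K -> K -> R) : Prop :=
  forall C, Qs_closed C -> Qs_bounded d C -> Qs_compact C.

End Qpstar.

Definition dpp (p : nat) (R : realType) (K : fieldType) (absK : K -> R)
  (x y : K) : R :=
  `| ln (absK x) / ln (p%:R) - ln (absK y) / ln (p%:R) |.

From mathcomp Require Import all_boot all_order all_algebra.
From mathcomp Require Import all_classical all_reals all_analysis.
From mathcomp Require Import ring lra.
Import Order.TTheory GRing.Theory Num.Theory.
Local Open Scope ring_scope.

(** The p-adic absolute value is bounded by 1 on the integers, hence (by the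
    power trick) ultrametric, and density of Q forces its values to lie in p^Z.
    A closed set on which |x| is bounded above and away from 0 is then compact
    by a nested-ball argument: an uncovered ball of radius r splits into p
    balls of radius r/p, one of which stays uncovered, and completeness
    provides a limit point, which some open set of the cover contains together
    with a whole small ball.  Sets bounded for d_p'' are exactly such sets, and
    d_p''-balls are unions of spheres {|x| = c}, which are open.

    Conversely, let d be a translation-invariant semi-ultrametric and g = 1/p.
    Since d(g^n, g^(n+1)) = d(1, g), the ultrametric inequality gives
    d(1, g^n) <= d(1, g) for all n.  An open ultrametric ball is also closed,
    so the ball of radius d(1, g) + 1 around 1 is closed and bounded; but it
    contains every g^n, and |g^n| = p^n is unbounded, so it is not compact. *)

Lemma bernoulli_inequality (R : realDomainType) (h : R) n :
  0 <= h -> 1 + n%:R * h <= (1 + h) ^+ n.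
Proof.
move=> h0; elim: n => [|n IH]; first by rewrite mul0r addr0 expr0.
rewrite exprS -natr1.
have e0 : 0 <= (1 + h) ^+ n by apply: exprn_ge0; lra.
have n0 : 0 <= (n%:R : R) by [].
nra.
Qed.

(* Bernoulli gives [(1 + h) ^+ (2 k) >= (1 + k h) ^+ 2 > 2 k + 1] once [k h^2 > 2]. *)
Lemma le1_of_exprn_le_natS (R : archiRealFieldType) (t : R) :
  (forall n, t ^+ n <= n.+1%:R) -> t <= 1.
Proof.
move=> ht; rewrite leNgt; apply/negP => t1.
set h := t - 1; have h0 : 0 < h by rewrite subr_gt0.
have h2 : 0 < h * h by rewrite mulr_gt0.
set k := Num.Def.archi_bound (2 / (h * h)).
have hk : 2 < k%:R * (h * h).
  by rewrite -ltr_pdivrMr //; apply: archi_boundP; rewrite divr_ge0 ?ltW.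
have tE : t = 1 + h by rewrite /h; ring.
have hk0 : 0 <= (k%:R : R) by [].
have e1 : 1 + k%:R * h <= t ^+ k by rewrite tE bernoulli_inequality ?ltW.
have e2 : (1 + k%:R * h) * (1 + k%:R * h) <= t ^+ k * t ^+ k.
  by apply: ler_pM => //; apply: addr_ge0 => //; rewrite mulr_ge0 ?ltW.
have := ht (k + k)%N; rewrite exprD -addn1 !natrD => e3.
nra.
Qed.

Lemma dvdz_sub_residue_mul {p : nat} {m : int} (n : int) : (0 < p)%N -> coprimez m p ->
  exists2 d : nat, (d < p)%N & (p %| n - d%:Z * m)%Z.
Proof.
move=> p_gt0 /eqP mp1; have [u [v]] := Bezoutz m p; rewrite mp1 => uv1.
have p_gtz0 : 0 < p%:Z by rewrite ltz_nat.
set r := ((n * u) %% p)%Z.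
have r_ge0 : 0 <= r by rewrite modz_ge0 ?gt_eqF.
exists `|r|%N; first by rewrite -ltz_nat gez0_abs // ltz_pmod.
have -> : n - `|r|%N%:Z * m = (n * v + ((n * u) %/ p)%Z * m) * p.
  rewrite gez0_abs // /r /modz -{1}[n]mulr1 -uv1; ring.
exact: dvdz_mull.
Qed.

Definition finitely_covered {T I : Type} (U : I -> T -> Prop) (A : T -> Prop) : Prop :=
  exists n (f : 'I_n -> I), forall x, A x -> exists k, U (f k) x.

Section FiniteCovers.
Context {T I : Type} {U : I -> T -> Prop}.
Local Notation finitely_covered := (finitely_covered U).

Lemma finitely_covered_sub {A B : T -> Prop} :
  (forall x, A x -> B x) -> finitely_covered B -> finitely_covered A.
Proof. by move=> AB [n [f fB]]; exists n, f => x /AB /fB. Qed.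

Lemma finitely_covered_empty {A : T -> Prop} :
  (forall x, ~ A x) -> finitely_covered A.
Proof. by move=> A0; exists 0%N, (ffun0 (rT := fun _ => I) (card_ord 0)) => x /A0. Qed.

Lemma finitely_coveredU {A B : T -> Prop} :
  finitely_covered A -> finitely_covered B -> finitely_covered (fun x => A x \/ B x).
Proof.
move=> [n1 [f1 fA]] [n2 [f2 fB]].
exists (n1 + n2)%N, (fun k => match fintype.split k with inl a => f1 a | inr b => f2 b end).
move=> x [/fA [k Uk]|/fB [k Uk]].
  by exists (unsplit (inl k)); rewrite unsplitK.
by exists (unsplit (inr k)); rewrite unsplitK.
Qed.

Lemma finitely_covered_bigU {A : nat -> T -> Prop} {N} :
  (forall d, (d < N)%N -> finitely_covered (A d)) ->
  finitely_covered (fun x => exists2 d, (d < N)%N & A d x).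
Proof.
elim: N => [_|N IH AN]; first by apply: finitely_covered_empty => x [].
apply: (finitely_covered_sub (B := fun x => (exists2 d, (d < N)%N & A d x) \/ A N x)).
  move=> x [d]; rewrite ltnS leq_eqVlt => /orP[/eqP->|dN] Ad; [right | left; exists d] => //.
by apply: finitely_coveredU; [apply: IH => d /ltnW/AN | apply: AN].
Qed.

End FiniteCovers.

Lemma dependent_choice_nat (T : Type) (P : nat -> T -> Prop)
    (Q : nat -> T -> T -> Prop) (x0 : T) :
  P 0%N x0 -> (forall n x, P n x -> exists2 y, P n.+1 y & Q n x y) ->
  exists u : nat -> T, forall n, P n (u n) /\ Q n (u n) (u n.+1).
Proof.
move=> Px0 step.
have total_step (nx : nat * T) : exists y, P nx.1 nx.2 -> P nx.1.+1 y /\ Q nx.1 nx.2 y.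
  case: nx => n x; have [/step [y Py Qy]|NPx] := pselect (P n x); first by exists y.
  by exists x.
have [f fP] := choice total_step.
pose u := fix u n := if n is m.+1 then f (m, u m) else x0.
have Pu n : P n (u n) by elim: n => [|n IH] //=; case: (fP (n, u n) IH).
by exists u => n; split => //; case: (fP (n, u n) (Pu n)).
Qed.

Section SemiUltrametric.
Context {R : realType} {K : fieldType} {d : K -> K -> R}.
Hypothesis d_ultra : Qs_semi_ultrametric d.

Lemma semi_ultrametric_dist1X g n : Qs_translation_invariant d -> g != 0 ->
  d 1 (g ^+ n) <= d 1 g.
Proof.
move=> d_inv g0; have [d_sm ultra] := d_ultra; have one0 := oner_neq0 K.
have gX0 k : g ^+ k != 0 by rewrite expf_neq0.
elim: n => [|n IH].
  rewrite expr0; have [_ -> _ _] := d_sm 1 1 1 one0 one0 one0.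
  by have [] := d_sm 1 g 1 one0 g0 one0.
apply: le_trans (ultra 1 (g ^+ n) (g ^+ n.+1) one0 (gX0 n) (gX0 n.+1)) _.
by rewrite ge_max IH /= exprSr -{1}(mulr1 (g ^+ n)) d_inv.
Qed.

(* A point [y] outside the ball has a neighbourhood [d y z < r], and no such
   [z] can lie in the ball since [d x y <= max (d x z) (d z y)]. *)
Lemma semi_ultrametric_ball_closed {absK : K -> R} {x r} :
  Qs_compatible absK d -> x != 0 -> 0 < r ->
  Qs_closed absK (fun y => y != 0 /\ d x y < r).
Proof.
move=> d_compat x0 r0; have [d_sm ultra] := d_ultra.
split; first by move=> y [].
split; first by move=> y [].
move=> y [y0 Nxy]; have ry : r <= d x y by rewrite leNgt; apply/negP => xy; apply: Nxy.
have [_ dyy _ _] := d_sm y y y y0 y0 y0.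
have [e [e0 eB]] : exists e : R, 0 < e /\
    forall z, z != 0 -> absK (z - y) < e -> z != 0 /\ d y z < r.
  by apply: (d_compat y r y0).2; rewrite dyy.
exists e; split => // z z0 zy; split => // -[_ xz]; have [_ yz] := eB z z0 zy.
have [_ _ zyC _] := d_sm z y z z0 y0 z0.
have : d x y < r by apply: le_lt_trans (ultra x z y x0 z0 y0) _; rewrite zyC gt_max xz yz.
by rewrite ltNge ry.
Qed.

End SemiUltrametric.

Section AbsoluteValue.
Context {R : realType} {K : fieldType} {absK : K -> R}.
Hypothesis abs_ge0 : forall x, 0 <= absK x.
Hypothesis abs_eq0 : forall x, absK x = 0 <-> x = 0.
Hypothesis absM : forall x y, absK (x * y) = absK x * absK y.
Hypothesis absD : forall x y, absK (x + y) <= absK x + absK y.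

Lemma abs0 : absK 0 = 0. Proof. exact/abs_eq0. Qed.

Lemma abs_gt0 {x} : x != 0 -> 0 < absK x.
Proof. by move=> x0; rewrite lt_def abs_ge0 andbT; apply: contra x0 => /eqP/abs_eq0->. Qed.

Lemma abs1 : absK 1 = 1.
Proof.
have h1 : absK 1 != 0 by rewrite gt_eqF ?abs_gt0 ?oner_neq0.
by apply: (mulfI h1); rewrite -absM !mulr1.
Qed.

Lemma absV x : absK x^-1 = (absK x)^-1.
Proof.
have [->|x0] := eqVneq x 0; first by rewrite invr0 abs0 invr0.
by apply: (mulfI (lt0r_neq0 (abs_gt0 x0))); rewrite -absM !divff ?abs1 ?lt0r_neq0 ?abs_gt0.
Qed.

Lemma absX x n : absK (x ^+ n) = absK x ^+ n.
Proof. by elim: n => [|n IH]; rewrite ?expr0 ?abs1 // !exprS absM IH. Qed.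

Lemma absN x : absK (- x) = absK x.
Proof.
have : absK (-1) ^+ 2 = 1 ^+ 2 by rewrite -absX sqrrN !expr1n abs1.
move/eqP; rewrite eqrXn2 ?abs_ge0 // => /eqP absN1.
by rewrite -mulN1r absM absN1 mul1r.
Qed.

Lemma abs_distC x y : absK (x - y) = absK (y - x).
Proof. by rewrite -absN opprB. Qed.

Lemma abs_sum (I : Type) (r : seq I) (F : I -> K) :
  absK (\sum_(i <- r) F i) <= \sum_(i <- r) absK (F i).
Proof.
elim/big_rec2: _ => [|i y1 y2 _ h]; first by rewrite abs0.
by apply: le_trans (absD _ _) _; rewrite lerD2l.
Qed.

Lemma Qs_compact_abs_bounded {C} : Qs_compact absK C -> exists M, forall y, C y -> absK y < M.
Proof.
move=> [C0 C_cover]; pose U (k : nat) y := y != 0 /\ absK y < k%:R.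
have U_open k : Qs_open absK (U k).
  split=> [y [] //|y [y0 yk]]; exists (k%:R - absK y); split; first by rewrite subr_gt0.
  move=> z z0 zy; split => //; have := absD (z - y) y.
  by rewrite subrK => /le_lt_trans; apply; rewrite -ltrBrDr.
have [n [f fU]] := C_cover nat U U_open (fun y Cy =>
  ex_intro _ (Num.Def.archi_bound (absK y)) (conj (C0 y Cy) (archi_boundP (abs_ge0 y)))).
exists (\max_(k < n) f k)%N%:R => y /fU [k [_ yk]].
by apply: lt_le_trans yk _; rewrite ler_nat (leq_bigmax k).
Qed.

Lemma dpp_semimetric p : Qs_semimetric (dpp p absK).
Proof.
by move=> x y z _ _ _; rewrite /dpp; split; [exact: normr_ge0 | rewrite subrr normr0
  | exact: distrC | exact: ler_distD].
Qed.

Lemma dpp_translation_invariant p : Qs_translation_invariant (dpp p absK).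
Proof.
move=> g x y g0 x0 y0; rewrite /dpp !absM !lnM ?posrE ?abs_gt0 //.
by congr `|_|; rewrite !mulrDl; ring.
Qed.

Section Nonarchimedean.
Hypothesis abs_natr_le1 : forall n, absK n%:R <= 1.

Lemma absXD_le x y n :
  absK ((x + y) ^+ n) <= n.+1%:R * Num.max (absK x) (absK y) ^+ n.
Proof.
set M := Num.max _ _; have M0 : 0 <= M by rewrite le_max abs_ge0.
rewrite exprDn; apply: le_trans (abs_sum _ _ _) _.
apply: (@le_trans _ _ (\sum_(i < n.+1) M ^+ n)); last first.
  by rewrite sumr_const card_ord mulr_natl.
apply: ler_sum => i _.
rewrite -mulr_natr !absM !absX -[M ^+ n]mulr1 ler_pM ?mulr_ge0 ?exprn_ge0 //.
have -> : M ^+ n = M ^+ (n - i) * M ^+ i by rewrite -exprD subnK // -ltnS.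
by apply: ler_pM; rewrite ?exprn_ge0 //; apply: lerXn2r;
  rewrite ?nnegrE ?le_max ?abs_ge0 ?lexx ?orbT.
Qed.

(* The power trick: [absXD_le] bounds the [n]-th powers of [|x + y| / M] by [n + 1]. *)
Lemma absD_le_max x y : absK (x + y) <= Num.max (absK x) (absK y).
Proof.
set M := Num.max _ _; have M0 : 0 <= M by rewrite le_max abs_ge0.
have [M_eq0|M_gt0] := eqVneq M 0.
  by have := absXD_le x y 1; rewrite -/M M_eq0 !expr1 mulr0.
have M_pos : 0 < M by rewrite lt_def M_gt0.
rewrite -[leRHS]mul1r -ler_pdivrMr //; apply: le1_of_exprn_le_natS => n.
by rewrite expr_div_n ler_pdivrMr ?exprn_gt0 // -absX absXD_le.
Qed.

Lemma abs_dist_le_max x y z : absK (x - z) <= Num.max (absK (x - y)) (absK (y - z)).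
Proof. by have := absD_le_max (x - y) (y - z); rewrite addrA subrK. Qed.

Lemma abs_eq_of_dist_lt {x y} : absK (y - x) < absK x -> absK y = absK x.
Proof.
move=> yx; apply/eqP; rewrite eq_le; apply/andP; split.
  have := absD_le_max x (y - x); rewrite addrC subrK => /le_trans; apply.
  by rewrite ge_max lexx ltW.
have := absD_le_max y (x - y); rewrite addrC subrK le_max => /orP[] // xy.
by move: yx; rewrite abs_distC ltNge xy.
Qed.

End Nonarchimedean.

Section Padic.
Context {p : nat}.
Hypothesis p_prime : prime p.
Hypothesis abs_ratr : forall q : rat, absK (ratr q) = padic_abs_rat R p q.

Lemma natr_p_gt1 : 1 < (p%:R : R). Proof. by rewrite ltr1n prime_gt1. Qed.

Lemma natr_p_gt0 : 0 < (p%:R : R). Proof. exact: lt_trans ltr01 natr_p_gt1. Qed.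

Lemma natr_pV_gt0 : 0 < (p%:R : R)^-1. Proof. by rewrite invr_gt0 natr_p_gt0. Qed.

Lemma natr_pV_lt1 : (p%:R : R)^-1 < 1.
Proof. by rewrite invf_lt1 ?natr_p_gt0 ?natr_p_gt1. Qed.

Lemma abs_intr (z : int) :
  absK z%:~R = if z == 0 then 0 else (p%:R : R) ^- logn p `|z|.
Proof.
rewrite -ratr_int abs_ratr /padic_abs_rat intr_eq0; case: eqP => // _.
by rewrite /padic_val numq_int denq_int /= logn1 subr0 exprnN.
Qed.

Lemma abs_intr_coprime {z : int} : ~~ (p %| `|z|)%N -> absK z%:~R = 1.
Proof.
move=> pNz; rewrite abs_intr; case: eqP => [z0|_]; first by rewrite z0 dvdn0 in pNz.
by rewrite logn_coprime ?expr0 ?invr1 // prime_coprime.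
Qed.

Lemma abs_intr_dvd {z : int} : (p %| `|z|)%N -> absK z%:~R <= (p%:R : R)^-1.
Proof.
move=> pz; rewrite abs_intr; case: eqP => [_|/eqP z0]; first exact: ltW natr_pV_gt0.
have : (0 < logn p `|z|)%N by rewrite logn_gt0 mem_primes p_prime pz absz_gt0 z0.
case: (logn p `|z|) => // n _; rewrite lef_pV2 ?posrE ?exprn_gt0 ?natr_p_gt0 //.
by rewrite exprS ler_pMr ?exprn_ege1 ?natr_p_gt0 ?(ltW natr_p_gt1).
Qed.

Lemma abs_intr_le1 (z : int) : absK z%:~R <= 1.
Proof.
have [pz|pNz] := boolP (p %| `|z|)%N; last by rewrite (abs_intr_coprime pNz).
exact: le_trans (abs_intr_dvd pz) (ltW natr_pV_lt1).
Qed.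

Lemma padic_abs_natr_le1 n : absK n%:R <= 1.
Proof. exact: (abs_intr_le1 n). Qed.

Lemma abs_natr_p : absK p%:R = (p%:R : R)^-1.
Proof.
rewrite -[p%:R]/((p%:Z)%:~R) abs_intr eqz_nat gtn_eqF ?prime_gt0 //.
by rewrite logn_prime // eqxx expr1.
Qed.

Lemma natr_p_neq0 : (p%:R : K) != 0.
Proof.
by apply: contra_neq (lt0r_neq0 natr_pV_gt0) => p0; rewrite -abs_natr_p p0 abs0.
Qed.

Lemma intr_neq0 (z : int) : z != 0 -> (z%:~R : K) != 0.
Proof.
move=> z0; apply/eqP => zK0; have := abs_intr z; rewrite zK0 abs0 (negbTE z0).
by move/esym/eqP; rewrite gt_eqF // invr_gt0 exprn_gt0 ?natr_p_gt0.
Qed.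

Lemma abs_ratr_denq {q : rat} : absK (ratr q) <= 1 -> absK (denq q)%:~R = 1.
Proof.
move=> q_le1; have [pd|pNd] := boolP (p %| `|denq q|)%N; last exact: abs_intr_coprime pNd.
have pNn : ~~ (p %| `|numq q|)%N.
  apply: contraTN (coprime_num_den q) => pn.
  apply/negP => /eqP g1; have : (p %| gcdn `|numq q| `|denq q|)%N by rewrite dvdn_gcd pn.
  by rewrite g1 dvdn1 gtn_eqF ?prime_gt1.
have den0 : (denq q)%:~R != 0 :> K by rewrite intr_neq0 ?denq_neq0.
move: q_le1; rewrite [ratr q]/ratr absM absV (abs_intr_coprime pNn) mul1r.
rewrite invf_le1 ?abs_gt0 // => /le_trans/(_ (abs_intr_dvd pd)).
by rewrite leNgt natr_pV_lt1.
Qed.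

Lemma abs_mul_natr_pX t n : absK (t * p%:R ^+ n) = absK t * (p%:R : R)^-1 ^+ n.
Proof. by rewrite absM absX abs_natr_p. Qed.

Lemma abs_mul_natr_pX_small t e : 0 < e -> exists n, absK (t * p%:R ^+ n) < e.
Proof.
move=> e0; set k := Num.Def.archi_bound (absK t / e).
have tk : absK t / e < k%:R by apply: archi_boundP; rewrite divr_ge0 ?abs_ge0 ?ltW.
have kp : (k%:R : R) < p%:R ^+ k by rewrite -natrX ltr_nat ltn_expl ?prime_gt1.
exists k; rewrite abs_mul_natr_pX exprVn ltr_pdivrMr ?exprn_gt0 ?natr_p_gt0 //.
by rewrite -ltr_pdivrMl // mulrC (lt_trans tk kp).
Qed.

Lemma abs_natr_pVX_unbounded (B : R) : exists k, B < absK ((p%:R : K)^-1 ^+ k).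
Proof.
set k := Num.Def.archi_bound `|B|.
have Bk : `|B| < k%:R by apply: archi_boundP.
have kp : (k%:R : R) < p%:R ^+ k by rewrite -natrX ltr_nat ltn_expl ?prime_gt1.
exists k; rewrite absX absV abs_natr_p invrK.
exact: le_lt_trans (ler_norm B) (lt_trans Bk kp).
Qed.

Let abs_dist_max := abs_dist_le_max padic_abs_natr_le1.

Lemma dpp_compatible : Qs_compatible absK (dpp p absK).
Proof.
move=> x r x0; split=> [y [] //|y [y0 xy]]; exists (absK y); split; first exact: abs_gt0.
by move=> z z0 zy; split; rewrite // /dpp (abs_eq_of_dist_lt padic_abs_natr_le1 zy).
Qed.

Lemma no_translation_invariant_proper_semi_ultrametric {d : K -> K -> R} :
  Qs_semi_ultrametric d -> Qs_translation_invariant d -> Qs_compatible absK d ->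
  ~ Qs_proper absK d.
Proof.
move=> d_ultra d_inv d_compat d_proper.
set g : K := p%:R^-1; have g0 : g != 0 by rewrite invr_eq0 natr_p_neq0.
have one0 := oner_neq0 K; have [dg0 _ _ _] := d_ultra.1 1 g 1 one0 g0 one0.
have r0 : 0 < d 1 g + 1 := ltr_wpDl dg0 ltr01.
pose B y := y != 0 /\ d 1 y < d 1 g + 1.
have B_bounded : Qs_bounded d B by exists 1, (d 1 g + 1); split => // y [_ /ltW].
have [M ballM] := Qs_compact_abs_bounded
  (d_proper B (semi_ultrametric_ball_closed d_ultra d_compat one0 r0) B_bounded).
have [k Mk] := abs_natr_pVX_unbounded M.
have gk_ball : g ^+ k != 0 /\ d 1 (g ^+ k) < d 1 g + 1.
  split; first exact: expf_neq0.
  by apply: le_lt_trans (semi_ultrametric_dist1X d_ultra g k d_inv g0) _; rewrite ltrDl.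
by have := lt_trans (ballM _ gk_ball) Mk; rewrite ltxx.
Qed.

Section Dense.
Hypothesis abs_dense : forall x e, 0 < e -> exists q : rat, absK (x - ratr q) < e.

Lemma abs_lt1_le_pV x : absK x < 1 -> absK x <= (p%:R : R)^-1.
Proof.
move=> x_lt1; have [->|x0] := eqVneq x 0; first by rewrite abs0 ltW ?natr_pV_gt0.
have [q xq] := abs_dense x _ (abs_gt0 x0).
have qx : absK (ratr q) = absK x.
  by apply: (abs_eq_of_dist_lt padic_abs_natr_le1); rewrite abs_distC.
have den1 : absK (denq q)%:~R = 1 by apply: abs_ratr_denq; rewrite qx ltW.
have qnum : absK (ratr q) = absK (numq q)%:~R.
  by rewrite [ratr q]/ratr absM absV den1 invr1 mulr1.
rewrite -qx qnum; have [pn|pNn] := boolP (p %| `|numq q|)%N.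
  exact: abs_intr_dvd.
by move: x_lt1; rewrite -qx qnum (abs_intr_coprime pNn) ltxx.
Qed.

Lemma exists_digit w : absK w <= 1 ->
  exists2 d, (d < p)%N & absK (w - d%:R) <= (p%:R : R)^-1.
Proof.
move=> w_le1; have [q wq] := abs_dense w _ ltr01.
have q_le1 : absK (ratr q) <= 1.
  have := absD_le_max padic_abs_natr_le1 w (ratr q - w); rewrite addrC subrK => /le_trans; apply.
  by rewrite ge_max w_le1 -abs_distC ltW.
have den1 := abs_ratr_denq q_le1.
have den0 : (denq q)%:~R != 0 :> K by rewrite intr_neq0 ?denq_neq0.
have pNd : coprimez (denq q) p.
  rewrite coprimezE coprime_sym prime_coprime //; apply/negP => pd.
  by have := abs_intr_dvd pd; rewrite den1 leNgt natr_pV_lt1.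
have [d dp pdiv] := dvdz_sub_residue_mul (numq q) (prime_gt0 p_prime) pNd.
exists d => //; apply: le_trans (abs_dist_max w (ratr q) d%:R) _.
rewrite ge_max abs_lt1_le_pV //=.
have -> : ratr q - d%:R = (numq q - d%:Z * denq q)%:~R / (denq q)%:~R :> K.
  by rewrite [ratr q]/ratr intrB intrM; field.
by rewrite absM absV den1 invr1 mulr1 abs_intr_dvd // -dvdzE.
Qed.

Lemma ball_split_digits {t c x} : t != 0 -> absK (x - c) <= absK t ->
  exists2 d, (d < p)%N & absK (x - (c + d%:R * t)) <= absK t * (p%:R : R)^-1.
Proof.
move=> t0 xc; have [d dp xd] : exists2 d, (d < p)%N &
    absK ((x - c) / t - d%:R) <= (p%:R : R)^-1.
  by apply: exists_digit; rewrite absM absV ler_pdivrMr ?abs_gt0 ?mul1r.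
exists d => //.
have -> : x - (c + d%:R * t) = ((x - c) / t - d%:R) * t by field.
by rewrite absM mulrC ler_pM2l ?abs_gt0.
Qed.

Section Complete.
Hypothesis abs_complete : forall u : nat -> K,
  (forall e, 0 < e -> exists N, forall m n, (N <= m)%N -> (N <= n)%N ->
      absK (u m - u n) < e) ->
  exists l, forall e, 0 < e -> exists N, forall n, (N <= n)%N -> absK (u n - l) < e.

Lemma abs_mul_natr_pX_le {t m n} : (n <= m)%N ->
  absK (t * p%:R ^+ m) <= absK (t * p%:R ^+ n).
Proof.
have pV_ge0 := ltW natr_pV_gt0; move=> /subnK <-.
rewrite !abs_mul_natr_pX exprD mulrCA ler_piMl ?mulr_ge0 ?abs_ge0 ?exprn_ge0 //.
by rewrite exprn_ile1 // (ltW natr_pV_lt1).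
Qed.

Lemma cvg_of_abs_step_le {u : nat -> K} {t} : t != 0 ->
  (forall n, absK (u n.+1 - u n) <= absK (t * p%:R ^+ n)) ->
  exists l, forall n, absK (u n - l) <= absK (t * p%:R ^+ n).
Proof.
move=> t0 u_step; pose r n := absK (t * p%:R ^+ n).
have r_gt0 n : 0 < r n by rewrite abs_gt0 // mulf_neq0 ?expf_neq0 ?natr_p_neq0.
have u_cauchy n m : (n <= m)%N -> absK (u m - u n) <= r n.
  move=> /subnK <-; elim: (m - n)%N => [|k IH]; first by rewrite subrr abs0 ltW.
  apply: le_trans (abs_dist_max _ (u (k + n)%N) _) _; rewrite ge_max IH andbT addSn.
  exact: le_trans (u_step _) (abs_mul_natr_pX_le (leq_addl _ _)).
have [l ul] : exists l, forall e, 0 < e -> exists N, forall n, (N <= n)%N ->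
    absK (u n - l) < e.
  apply: abs_complete => e e0; have [N rN] := abs_mul_natr_pX_small t _ e0.
  exists N => m n Nm Nn; apply: le_lt_trans (abs_dist_max _ (u N) _) _.
  by rewrite gt_max !(le_lt_trans _ rN) // ?u_cauchy // abs_distC u_cauchy.
exists l => n; have [N uN] := ul _ (r_gt0 n).
apply: le_trans (abs_dist_max _ (u (maxn N n)) _) _.
by rewrite ge_max abs_distC u_cauchy ?leq_maxr // ltW // uN // leq_maxl.
Qed.

Section NestedBalls.
Variables (I : Type) (U : I -> K -> Prop) (C : K -> Prop).
Local Notation uncovered c t :=
  (~ finitely_covered U (fun y => C y /\ absK (y - c) <= absK t)).

Lemma uncovered_subball c t : t != 0 -> uncovered c t ->
  exists2 c', uncovered c' (t * p%:R) & absK (c' - c) <= absK t.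
Proof.
move=> t0 Ncov; apply: contrapT => Nsub; apply: Ncov.
have subcov d : (d < p)%N ->
    finitely_covered U (fun y => C y /\ absK (y - (c + d%:R * t)) <= absK (t * p%:R)).
  move=> dp; apply: contrapT => Ncovd; apply: Nsub; exists (c + d%:R * t) => //.
  by rewrite addrC addKr absM ler_piMl ?padic_abs_natr_le1.
apply: (finitely_covered_sub _ (finitely_covered_bigU subcov)) => y [Cy yc].
have [d dp yd] := ball_split_digits t0 yc.
by exists d => //; split; rewrite // absM abs_natr_p.
Qed.

Lemma nested_uncovered_balls c t : t != 0 -> uncovered c t ->
  exists u : nat -> K, forall n,
    uncovered (u n) (t * p%:R ^+ n) /\ absK (u n.+1 - u n) <= absK (t * p%:R ^+ n).
Proof.
move=> t0 Ncov; have step n c' : uncovered c' (t * p%:R ^+ n) ->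
    exists2 c'', uncovered c'' (t * p%:R ^+ n.+1) & absK (c'' - c') <= absK (t * p%:R ^+ n).
  rewrite exprSr mulrA; apply: uncovered_subball.
  by rewrite mulf_neq0 ?expf_neq0 ?natr_p_neq0.
by apply: (@dependent_choice_nat _ _ _ c _ step); rewrite expr0 mulr1.
Qed.

End NestedBalls.

Lemma Qs_compact_annulus C t L : Qs_closed absK C -> t != 0 -> 0 < L ->
  (forall y, C y -> L <= absK y <= absK t) -> Qs_compact absK C.
Proof.
move=> [Cnz Copen] t0 L0 C_ann; split => // I U Uopen Ucov; apply: contrapT => NcovC.
have [u uP] : exists u : nat -> K, forall n,
    ~ finitely_covered U (fun y => C y /\ absK (y - u n) <= absK (t * p%:R ^+ n)) /\
    absK (u n.+1 - u n) <= absK (t * p%:R ^+ n).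
  apply: (@nested_uncovered_balls I U C 0 t t0) => cov0; apply: NcovC.
  by apply: (finitely_covered_sub _ cov0) => y Cy; rewrite subr0; case/andP: (C_ann y Cy).
have [l ul] := cvg_of_abs_step_le t0 (fun n => (uP n).2).
have near_l n : exists2 s, C s & absK (s - l) <= absK (t * p%:R ^+ n).
  apply: contrapT => Nnear; apply: (uP n).1; apply: finitely_covered_empty.
  move=> y [Cy yu]; apply: Nnear; exists y => //.
  by apply: le_trans (abs_dist_max _ (u n) _) _; rewrite ge_max yu ul.
have l0 : l != 0.
  apply/eqP => l0; have [n tL] := abs_mul_natr_pX_small t _ L0.
  have [s Cs sl] := near_l n; have /andP[Ls _] := C_ann s Cs; rewrite l0 subr0 in sl.
  by have := le_lt_trans (le_trans Ls sl) tL; rewrite ltxx.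
have Cl : C l.
  apply: contrapT => NCl; have [e [e0 eC]] := Copen.2 l (conj l0 NCl).
  have [n te] := abs_mul_natr_pX_small t _ e0; have [s Cs sl] := near_l n.
  by have [] := eC s (Cnz s Cs) (le_lt_trans sl te).
have [i Uil] := Ucov l Cl; have [e [e0 eU]] := (Uopen i).2 l Uil.
have [n te] := abs_mul_natr_pX_small t _ e0.
apply: (uP n).1; exists 1%N, (fun _ => i) => y [Cy yu]; exists ord0.
apply: eU (Cnz y Cy) _; apply: le_lt_trans (abs_dist_max _ (u n) _) _.
by rewrite gt_max !(le_lt_trans _ te) // ul.
Qed.

Lemma dpp_proper : Qs_proper absK (dpp p absK).
Proof.
move=> C C_closed [x0 [r [x00 C_near]]].
set lp := ln (p%:R : R); have lp0 : 0 < lp by rewrite ln_gt0 ?natr_p_gt1.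
set a := ln (absK x0) / lp.
have absE y : y != 0 -> absK y = expR (ln (absK y) / lp * lp).
  by move=> y0; rewrite divfK ?gt_eqF // lnK // posrE abs_gt0.
have [k pk] := abs_natr_pVX_unbounded (expR ((a + r) * lp)).
apply: (@Qs_compact_annulus C ((p%:R^-1) ^+ k) (expR ((a - r) * lp)) C_closed).
- by rewrite expf_neq0 // invr_eq0 natr_p_neq0.
- exact: expR_gt0.
move=> y Cy; have y0 := C_closed.1 y Cy.
have := C_near y Cy; rewrite /dpp -/lp -/a distrC ler_distl => /andP[lo hi].
rewrite absE // !ler_expR !ler_pM2r // lo /=.
by apply: ltW; apply: le_lt_trans pk; rewrite ler_expR ler_pM2r.
Qed.

End Complete.

End Dense.
End Padic.
End AbsoluteValue.

Theorem mainTheorem11 (p : nat) (R : realType) (K : fieldType) (absK : K -> R) :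
  prime p -> is_Qp p absK ->
  (Qs_semimetric (dpp p absK) /\
   Qs_translation_invariant (dpp p absK) /\
   Qs_compatible absK (dpp p absK) /\
   Qs_proper absK (dpp p absK)) /\
  ~ (exists d : K -> K -> R,
       Qs_semi_ultrametric d /\ Qs_translation_invariant d /\
       Qs_compatible absK d /\ Qs_proper absK d).
Proof.
move=> p_prime [abs_ge0 [abs_eq0 [absM [absD [abs_ratr [abs_dense abs_complete]]]]]].
split.
  split; first exact: dpp_semimetric.
  split; first exact: (dpp_translation_invariant abs_ge0 abs_eq0 absM p).
  split; first exact: (dpp_compatible abs_ge0 abs_eq0 absM absD p_prime abs_ratr).
  exact: (dpp_proper abs_ge0 abs_eq0 absM absD p_prime abs_ratr abs_dense abs_complete).
move=> [d [d_ultra [d_inv [d_compat d_proper]]]].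
exact: (no_translation_invariant_proper_semi_ultrametric abs_ge0 abs_eq0 absM absD
  p_prime abs_ratr d_ultra d_inv d_compat d_proper).
Qed.
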